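(* Let $0<\alpha<1$ and $\sigma=1-\alpha/2$. For every integer $s\ge1$, $$\frac12<\varkappa_s<\frac{1}{2-\alpha},\qquad\text{where}\quad \varkappa_s=\frac{(s+\sigma)^{2-\alpha}-(s-1+\sigma)^{2-\alpha}-(2-\alpha)(s-1+\sigma)^{1-\alpha}}{(2-\alpha)\big((s+\sigma)^{1-\alpha}-(s-1+\sigma)^{1-\alpha}\big)}.$$ *)

From Stdlib Require Import Reals.
Open Scope R_scope.

Definition sigma (alpha : R) : R := 1 - alpha / 2.

Definition kappa (alpha : R) (s : nat) : R :=
  let a := INR s + sigma alpha in
  let b := INR s - 1 + sigma alpha in
  (Rpower a (2 - alpha) - Rpower b (2 - alpha)
     - (2 - alpha) * Rpower b (1 - alpha))
  / ((2 - alpha) * (Rpower a (1 - alpha) - Rpower b (1 - alpha))).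

(* With b = s - 1 + sigma > 0 and beta = 1 - alpha, kappa_s equals
   (F(b+1) - F(b) - F'(b)) / (F'(b+1) - F'(b)) for F(x) = x^(1+beta), whose
   derivative (1+beta) x^beta is strictly concave.  Both bounds come from the
   graph of x^beta lying strictly below its tangents: at b this is the upper
   bound; at a moving point x it makes
   2(F(x) - F(b)) - (x - b)(F'(x) + F'(b)) increasing from 0 (the trapezoid
   rule underestimates the integral of a concave function), which at x = b + 1
   is the lower bound. *)
From Pilot Require Import Defs.
From Stdlib Require Import Reals Lra.
Open Scope R_scope.

Lemma Rpower_gt_0 x y : 0 < Rpower x y.
Proof. apply exp_pos. Qed.

Lemma Rpower_1_plus x y : 0 < x -> Rpower x (1 + y) = x * Rpower x y.
Proof. intros Hx. rewrite Rpower_plus, Rpower_1 by exact Hx. reflexivity. Qed.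

Lemma Rpower_pred x y : 0 < x -> Rpower x y = x * Rpower x (y - 1).
Proof.
  intros Hx. rewrite <- Rpower_1_plus by exact Hx. f_equal. ring.
Qed.

Lemma Rpower_lt_neg_exp x y e : 0 < x < y -> e < 0 -> Rpower y e < Rpower x e.
Proof.
  intros Hxy He. replace e with (- (- e)) by ring.
  rewrite (Rpower_Ropp y), (Rpower_Ropp x).
  apply Rinv_lt_contravar.
  - apply Rmult_lt_0_compat; apply Rpower_gt_0.
  - apply Rlt_Rpower_l; lra.
Qed.

Lemma lt_of_derive_pos f f' a b :
  a < b ->
  (forall c, a <= c <= b -> derivable_pt_lim f c (f' c)) ->
  (forall c, a < c < b -> 0 < f' c) ->
  f a < f b.
Proof.
  intros Hab Hder Hpos.
  destruct (MVT_cor2 f f' a b Hab Hder) as [c [Hmvt Hc]].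
  assert (0 < f' c * (b - a)) by (apply Rmult_lt_0_compat; [apply Hpos, Hc | lra]).
  lra.
Qed.

Lemma derivable_pt_lim_Rpower_sub_linear be k c : 0 < c ->
  derivable_pt_lim (fun t => Rpower t be - k * t) c (be * Rpower c (be - 1) - k).
Proof.
  intros Hc.
  replace (be * Rpower c (be - 1) - k) with (be * Rpower c (be - 1) - k * 1) by ring.
  apply (derivable_pt_lim_minus (fun t => Rpower t be) (fun t => k * t)).
  - apply derivable_pt_lim_power, Hc.
  - apply (derivable_pt_lim_scal (fun t => t)), derivable_pt_lim_id.
Qed.

(* t |-> t^be - k t with k = be x^(be-1) is maximal exactly at t = x. *)
Lemma Rpower_lt_tangent be x y :
  0 < be < 1 -> 0 < x -> 0 < y -> x <> y ->
  Rpower y be < Rpower x be + be * Rpower x (be - 1) * (y - x).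
Proof.
  intros Hbe Hx Hy Hxy.
  set (k := be * Rpower x (be - 1)).
  assert (Hslope : forall c, 0 < c -> c <> x ->
            0 < (be * Rpower c (be - 1) - k) * (x - c)).
  { intros c Hc Hcx. unfold k.
    destruct (Rlt_or_le c x) as [Hlt | Hle].
    - assert (Rpower x (be - 1) < Rpower c (be - 1)) by (apply Rpower_lt_neg_exp; lra).
      apply Rmult_lt_0_compat; nra.
    - assert (Rpower c (be - 1) < Rpower x (be - 1)) by (apply Rpower_lt_neg_exp; lra).
      assert (x < c) by lra.
      replace (_ * (x - c)) with ((be * Rpower x (be - 1) - be * Rpower c (be - 1)) * (c - x))
        by ring.
      apply Rmult_lt_0_compat; nra. }
  assert (Hmax : Rpower y be - k * y < Rpower x be - k * x).
  { destruct (Rlt_or_le y x) as [Hlt | Hle].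
    - apply (lt_of_derive_pos (fun t => Rpower t be - k * t)
               (fun c => be * Rpower c (be - 1) - k)); [lra | |].
      + intros c Hc. apply derivable_pt_lim_Rpower_sub_linear. lra.
      + intros c Hc. specialize (Hslope c ltac:(lra) ltac:(lra)). nra.
    - set (g := fun t => - (Rpower t be - k * t)).
      enough (g x < g y) by (unfold g in *; lra).
      apply (lt_of_derive_pos g (fun c => - (be * Rpower c (be - 1) - k))); [lra | |].
      + intros c Hc. apply derivable_pt_lim_opp, derivable_pt_lim_Rpower_sub_linear. lra.
      + intros c Hc. specialize (Hslope c ltac:(lra) ltac:(lra)). nra. }
  fold k. nra.
Qed.

Lemma Rpower_succ_increment_lt b be : 0 < b -> 0 < be < 1 ->
  Rpower (b + 1) (1 + be) - Rpower b (1 + be) - (1 + be) * Rpower b be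
  < Rpower (b + 1) be - Rpower b be.
Proof.
  intros Hb Hbe.
  assert (Htan : Rpower (b + 1) be < Rpower b be + be * Rpower b (be - 1) * (b + 1 - b))
    by (apply Rpower_lt_tangent; lra).
  rewrite (Rpower_1_plus (b + 1)), (Rpower_1_plus b), (Rpower_pred b be) by lra.
  rewrite (Rpower_pred b be) in Htan by lra.
  nra.
Qed.

Lemma Rpower_trapezoid_lt b be : 0 < b -> 0 < be < 1 ->
  (1 + be) * (Rpower (b + 1) be + Rpower b be)
  < 2 * (Rpower (b + 1) (1 + be) - Rpower b (1 + be)).
Proof.
  intros Hb Hbe.
  set (h := fun x => (1 - be) * Rpower x (1 + be) + (1 + be) * b * Rpower x be
                     - (1 + be) * Rpower b be * x).
  set (h' := fun x => (1 + be) * ((1 - be) * Rpower x be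
                     + be * b * Rpower x (be - 1) - Rpower b be)).
  assert (Hh : h b < h (b + 1)).
  { apply (lt_of_derive_pos h h'); [lra | |].
    - intros c Hc. unfold h, h'.
      replace (_ * (_ - Rpower b be)) with
        ((1 - be) * ((1 + be) * Rpower c (1 + be - 1))
         + (1 + be) * b * (be * Rpower c (be - 1)) - (1 + be) * Rpower b be * 1)
        by (replace (1 + be - 1) with be by ring; ring).
      apply derivable_pt_lim_minus; [apply derivable_pt_lim_plus |].
      + apply (derivable_pt_lim_scal (fun x => Rpower x (1 + be))),
          derivable_pt_lim_power; lra.
      + apply (derivable_pt_lim_scal (fun x => Rpower x be)),
          derivable_pt_lim_power; lra.
      + apply (derivable_pt_lim_scal (fun x => x)), derivable_pt_lim_id.
    - intros c Hc. unfold h'.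
      assert (Htan : Rpower b be < Rpower c be + be * Rpower c (be - 1) * (b - c))
        by (apply Rpower_lt_tangent; lra).
      rewrite (Rpower_pred c be) in Htan |- * by lra.
      apply Rmult_lt_0_compat; nra. }
  unfold h in Hh.
  rewrite (Rpower_1_plus (b + 1)), (Rpower_1_plus b) in Hh |- * by lra.
  nra.
Qed.

Theorem lemma3 (alpha : R) (s : nat) :
  0 < alpha -> alpha < 1 -> (1 <= s)%nat ->
  1 / 2 < kappa alpha s /\ kappa alpha s < 1 / (2 - alpha).
Proof.
  intros Halpha0 Halpha1 Hs.
  apply le_INR in Hs. simpl in Hs.
  unfold kappa, Defs.sigma; cbv zeta.
  set (b := INR s - 1 + (1 - alpha / 2)).
  set (be := 1 - alpha).
  assert (Hb : 0 < b) by (unfold b; lra).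
  assert (Hbe : 0 < be < 1) by (unfold be; lra).
  replace (INR s + (1 - alpha / 2)) with (b + 1) by (unfold b; ring).
  replace (2 - alpha) with (1 + be) by (unfold be; ring).
  pose proof (Rpower_succ_increment_lt b be Hb Hbe) as Hupper.
  pose proof (Rpower_trapezoid_lt b be Hb Hbe) as Hlower.
  assert (Hincr : Rpower b be < Rpower (b + 1) be) by (apply Rlt_Rpower_l; lra).
  set (N := Rpower (b + 1) (1 + be) - Rpower b (1 + be) - (1 + be) * Rpower b be) in *.
  set (D := Rpower (b + 1) be - Rpower b be) in *.
  assert (HD : 0 < D) by (unfold D; lra).
  assert (HDpos : 0 < (1 + be) * D) by (apply Rmult_lt_0_compat; lra).
  split.
  - apply (Rmult_lt_reg_r (2 * ((1 + be) * D))); [lra |].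
    replace (N / ((1 + be) * D) * (2 * ((1 + be) * D))) with (2 * N) by (field; lra).
    unfold N, D in *. lra.
  - apply (Rmult_lt_reg_r ((1 + be) * D)); [lra |].
    replace (N / ((1 + be) * D) * ((1 + be) * D)) with N by (field; lra).
    replace (1 / (1 + be) * ((1 + be) * D)) with D by (field; lra).
    exact Hupper.
Qed.
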